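(* For every graph $\mathcal{G}=(\mathcal{V},\mathcal{E})$ with $|\mathcal{V}|\ge4$ and no isolated vertices, the graph device $D(\mathcal{G})$ is minimal.
   Context: An abstract storage device (ASD) is a pair $D=(\mathcal{S}_D,\mathcal{P}_D)$, $\mathcal{S}_D$ a finite set and $\mathcal{P}_D$ a finite family of partitions of $\mathcal{S}_D$. For a partition $\pi$ of $\mathcal{S}'$ and $\phi:\mathcal{S}\to\mathcal{S}'$, $\pi\circ\phi$ is the partition of $\mathcal{S}$ with $x,y$ in the same block iff $\phi(x),\phi(y)$ are in the same block of $\pi$; $\pi\preceq\rho$ means every block of $\pi$ lies in a block of $\rho$. $D\le D'$ means there exist $\phi:\mathcal{S}_D\to\mathcal{S}_{D'}$, $\alpha:\mathcal{P}_D\to\mathcal{P}_{D'}$ with $\alpha(\pi)\circ\phi\preceq\pi$ for all $\pi\in\mathcal{P}_D$; $D\equiv D'$ means $D\le D'$ and $D'\le D$. $D$ is minimal if no $E\equiv D$ has $|\mathcal{S}_E|<|\mathcal{S}_D|$ and no $E\equiv D$ has $|\mathcal{P}_E|<|\mathcal{P}_D|$. For a finite undirected graph $\mathcal{G}=(\mathcal{V},\mathcal{E})$, the graph device $D(\mathcal{G})$ has state space $\mathcal{V}$ and partition set $\{\pi_e:e\in\mathcal{E}\}$, where for $e=\{u,v\}$, $\pi_e=\{\{u\},\{v\},\mathcal{V}\setminus\{u,v\}\}$. A vertex is isolated if it lies in no edge. *)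

From mathcomp Require Import all_boot.
Set Implicit Arguments. Unset Strict Implicit. Unset Printing Implicit Defensive.

(* An abstract storage device: a finite state space (a finType) together with
   a finite family (a set) of partitions of it. *)
Record asd := ASD { st : finType; parts : {set {set {set st}}} }.

Definition asd_ok (D : asd) : Prop :=
  forall p, p \in parts D -> partition p [set: st D].

Definition same_block (T : finType) (P : {set {set T}}) (x y : T) : bool :=
  [exists B in P, (x \in B) && (y \in B)].

Definition comp_part (S S' : finType) (P : {set {set S'}}) (phi : S -> S')
  : {set {set S}} :=
  [set [set y | same_block P (phi x) (phi y)] | x : S].

Definition refines (T : finType) (P Q : {set {set T}}) : bool :=
  [forall B in P, [exists C in Q, B \subset C]].

Definition asd_le (D D' : asd) : Prop :=
  exists (phi : st D -> st D') (alpha : {set {set st D}} -> {set {set st D'}}),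
    forall p, p \in parts D ->
      alpha p \in parts D' /\ refines (comp_part (alpha p) phi) p.

Definition asd_equiv (D D' : asd) : Prop := asd_le D D' /\ asd_le D' D.

Definition asd_minimal (D : asd) : Prop :=
  forall E : asd, asd_ok E -> asd_equiv E D ->
    #|st D| <= #|st E| /\ #|parts D| <= #|parts E|.

Definition simple_graph (V : finType) (g : rel V) : Prop :=
  symmetric g /\ irreflexive g.

Definition no_isolated (V : finType) (g : rel V) : Prop :=
  forall v : V, exists u : V, g u v.

Definition pi_edge (V : finType) (u v : V) : {set {set V}} :=
  [set [set u]; [set v]; [set: V] :\ u :\ v].

Definition graph_device (V : finType) (g : rel V) : asd :=
  @ASD V [set pi_edge e.1 e.2 | e in [set e : V * V | g e.1 e.2]].

From mathcomp Require Import all_boot.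

Set Implicit Arguments.
Unset Strict Implicit.
Unset Printing Implicit Defensive.

(* A reduction D(G) <= E has an injective state map, because every vertex is a
   singleton block of the partition of an edge at it.  Its partition map is
   injective as well: if two distinct edge partitions pi_ab and pi_cd were sent
   to the same partition q of E, then pulling q back along a reduction
   E <= D(G), which sends q to some pi_ef, shows that q only distinguishes
   points by their three-valued label with respect to e and f; yet pi_ab and
   pi_cd jointly separate four vertices. *)

Definition pi_edge_label (V : finType) (a b x : V) : option bool :=
  if x == a then Some true else if x == b then Some false else None.

Section EdgePartition.

Variables (V : finType) (a b : V).

Lemma same_block_pi_edge x y : a != b ->
  same_block (pi_edge a b) x y = (pi_edge_label a b x == pi_edge_label a b y).
Proof.
rewrite /pi_edge_label => ab; apply/existsP/eqP.
  case=> B /andP[]; rewrite !inE => /orP[/orP[]|]/eqP->; rewrite !inE.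
  - by case/andP=> /eqP-> /eqP->.
  - by case/andP=> /eqP-> /eqP->.
  - by case/and4P=> /and3P[/negbTE-> /negbTE-> _] /negbTE-> /negbTE->.
have [->|xa] := eqVneq x a.
  case: eqVneq => [-> _|_]; last by case: ifP => _ ?; discriminate.
  by exists [set a]; rewrite !inE !eqxx.
have [->|xb] := eqVneq x b.
  case: eqVneq => // _; case: eqVneq => // -> _.
  by exists [set b]; rewrite !inE !eqxx orbT.
case: eqVneq => // ya; case: eqVneq => // yb _.
by exists ([set: V] :\ a :\ b); rewrite !inE xa xb ya yb eqxx !orbT.
Qed.

Lemma same_block_pi_edge_refl x : same_block (pi_edge a b) x x.
Proof.
apply/existsP; have [->|xa] := eqVneq x a.
  by exists [set a]; rewrite !inE !eqxx.
have [->|xb] := eqVneq x b; first by exists [set b]; rewrite !inE !eqxx orbT.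
by exists ([set: V] :\ a :\ b); rewrite !inE xa xb eqxx !orbT.
Qed.

Lemma pi_edge_separates x y : a != b -> x \in [set a; b] ->
  same_block (pi_edge a b) x y -> x = y.
Proof.
move=> ab; rewrite same_block_pi_edge // /pi_edge_label.
case/set2P=> ->; [rewrite eqxx | rewrite (eq_sym b) (negbTE ab) eqxx].
  by case: (eqVneq y a) => [//|_]; case: (eqVneq y b).
by case: (eqVneq y a) => [//|_]; case: (eqVneq y b).
Qed.

Lemma pi_edgeE :
  pi_edge a b = [set [set x] | x in [set a; b]] :|: [set ~: [set a; b]].
Proof.
rewrite /pi_edge imsetU1 imset_set1; congr (_ :|: [set _]).
by apply/setP=> z; rewrite !inE negb_or andbT andbC.
Qed.

End EdgePartition.

Lemma partition_same_block_refl (T : finType) (P : {set {set T}}) x :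
  partition P [set: T] -> same_block P x x.
Proof.
case/and3P=> /eqP coverP _ _; have /bigcupP[B BP xB] : x \in cover P.
  by rewrite coverP inE.
by apply/existsP; exists B; rewrite BP xB.
Qed.

Lemma refines_comp_part_same_block (S S' : finType) (Q : {set {set S'}})
    (f : S -> S') (P : {set {set S}}) x y :
  refines (comp_part Q f) P -> same_block Q (f x) (f x) ->
  same_block Q (f x) (f y) -> same_block P x y.
Proof.
move=> /forallP/(_ [set z | same_block Q (f x) (f z)])/implyP.
rewrite imset_f // => /(_ isT)/existsP[C /andP[CP sub]] fxx fxy.
by apply/existsP; exists C; rewrite CP !(subsetP sub) ?inE.
Qed.

Lemma refines_comp_partition_same_block (S S' : finType) (Q : {set {set S'}})
    (f : S -> S') (P : {set {set S}}) x y :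
  partition Q [set: S'] -> refines (comp_part Q f) P ->
  same_block Q (f x) (f y) -> same_block P x y.
Proof.
move=> partQ refQ; apply: refines_comp_part_same_block refQ _.
exact: partition_same_block_refl.
Qed.

Lemma same_blockC (T : finType) (P : {set {set T}}) x y :
  same_block P x y = same_block P y x.
Proof.
by apply/existsP/existsP=> -[B /and3P[BP xB yB]]; exists B; rewrite BP xB yB.
Qed.

Section TwoEdges.

Variables (V : finType) (a b c d : V).
Hypotheses (ab : a != b) (cd : c != d) (neq_ab_cd : pi_edge a b != pi_edge c d).

Lemma card_pi_edge_pair_support : 3 <= #|[set a; b] :|: [set c; d]|.
Proof.
have neq_support : [set a; b] != [set c; d].
  by apply: contraNneq neq_ab_cd; rewrite !pi_edgeE => ->; apply: eqxx.
rewrite ltnNge; apply: contra neq_support => le2; apply/eqP.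
have fill (u v : V) : u != v -> [set u; v] \subset [set a; b] :|: [set c; d] ->
    [set u; v] = [set a; b] :|: [set c; d].
  move=> uv sub; apply/eqP; rewrite eqEcard sub cards2 uv.
  exact: leq_trans le2 _.
by rewrite (fill a b) ?subsetUl //; apply/esym/fill; rewrite ?subsetUr.
Qed.

Lemma pi_edge_pair_separating_set : 4 <= #|V| ->
  exists2 X : {set V}, 4 <= #|X| & {in X &, forall x y,
    same_block (pi_edge a b) x y -> same_block (pi_edge c d) x y -> x = y}.
Proof.
set K := [set a; b] :|: [set c; d].
have sepK x y : x \in K -> same_block (pi_edge a b) x y ->
    same_block (pi_edge c d) x y -> x = y.
  case/setUP=> xK sab scd; first exact: pi_edge_separates ab xK sab.
  exact: pi_edge_separates cd xK scd.
move=> cardV; have [KT|] := eqVneq K [set: V].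
  by exists K => [|x y xK _]; [rewrite KT cardsT | exact: sepK].
rewrite -subTset => /subsetPn[w _ wK].
exists (w |: K) => [|x y].
  by rewrite cardsU1 wK ltnS; exact: card_pi_edge_pair_support.
case/setU1P=> [->|xK]; last by move=> _; exact: sepK.
case/setU1P=> [-> //|yK]; rewrite (same_blockC (pi_edge a b)).
by rewrite (same_blockC (pi_edge c d)) => sab scd; apply/esym/sepK.
Qed.

End TwoEdges.

Section GraphDevice.

Variables (V : finType) (g : rel V).
Hypothesis g_irr : irreflexive g.

Lemma mem_graph_device_parts a b : g a b -> pi_edge a b \in parts (graph_device g).
Proof. by move=> gab; apply/imsetP; exists (a, b); rewrite ?inE. Qed.

Lemma graph_device_partsP P : P \in parts (graph_device g) ->
  exists a b, [/\ g a b, a != b & P = pi_edge a b].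
Proof.
case/imsetP=> -[a b]; rewrite inE /= => gab ->; exists a, b; split=> //.
by apply: contraTneq gab => ->; rewrite g_irr.
Qed.

Lemma graph_device_le_card_st (E : asd) : no_isolated g -> asd_ok E ->
  asd_le (graph_device g) E -> #|V| <= #|st E|.
Proof.
move=> noiso okE [phi [alpha le_phi]]; apply: (leq_card phi) => u w eq_phi.
have [x gxu] := noiso u; have [ax_ok ref] := le_phi _ (mem_graph_device_parts gxu).
apply: (@pi_edge_separates _ x u).
- by apply: contraTneq gxu => ->; rewrite g_irr.
- by rewrite !inE eqxx orbT.
- apply: refines_comp_partition_same_block (okE _ ax_ok) ref _.
  by rewrite eq_phi partition_same_block_refl ?okE.
Qed.

Lemma graph_device_le_card_parts (E : asd) : 4 <= #|V| -> asd_ok E ->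
  asd_le (graph_device g) E -> asd_le E (graph_device g) ->
  #|parts (graph_device g)| <= #|parts E|.
Proof.
move=> cardV okE [phi [alpha le_phi]] [psi [beta le_psi]].
have alpha_inj : {in parts (graph_device g) &, injective alpha}.
  move=> p1 p2 p1D p2D eq_alpha; apply/eqP; apply: contraT => neq_p.
  have [q_ok ref1] := le_phi _ p1D.
  have [_] := le_phi _ p2D; rewrite -eq_alpha => ref2.
  have [bq_ok refb] := le_psi _ q_ok.
  have [a [b [_ ab def_p1]]] := graph_device_partsP p1D.
  have [c [d [_ cd def_p2]]] := graph_device_partsP p2D.
  have [e [f [_ ef def_bq]]] := graph_device_partsP bq_ok.
  pose F z := pi_edge_label e f (psi (phi z)).
  have same_F x y : F x = F y -> same_block (alpha p1) (phi x) (phi y).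
    move=> eqF; apply: refines_comp_part_same_block refb _ _.
      by rewrite def_bq same_block_pi_edge_refl.
    by rewrite def_bq same_block_pi_edge //; apply/eqP.
  have neq_edges : pi_edge a b != pi_edge c d by rewrite -def_p1 -def_p2.
  have [X cardX sepX] := pi_edge_pair_separating_set ab cd neq_edges cardV.
  have F_inj : {in X &, injective F}.
    move=> x y xX yX /same_F sxy; apply: sepX => //; rewrite -?def_p1 -?def_p2.
      exact: refines_comp_partition_same_block (okE _ q_ok) ref1 sxy.
    exact: refines_comp_partition_same_block (okE _ q_ok) ref2 sxy.
  have := leq_card_in _ _ F_inj; rewrite card_option card_bool.
  by move/(leq_trans cardX).
rewrite -(card_in_imset alpha_inj); apply: subset_leq_card.
by apply/subsetP=> _ /imsetP[p pD ->]; exact: (le_phi p pD).1.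
Qed.

End GraphDevice.

Theorem lemma2 (V : finType) (g : rel V) :
  simple_graph g -> 4 <= #|V| -> no_isolated g ->
  asd_minimal (graph_device g).
Proof.
move=> [_ g_irr] cardV noiso E okE [le_ED le_DE]; split.
  exact: (graph_device_le_card_st g_irr noiso okE le_DE).
exact: (graph_device_le_card_parts g_irr cardV okE le_DE le_ED).
Qed.
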